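(* Let $(M,\mathcal A)$ be a measurable space, $m$ a probability measure on it, $\ell_1,\ell_2,\dots:M\to\mathbb R$ measurable functions, $L_0=0$, $L_t=\sum_{s=1}^t\ell_s$, and $(\beta_t)_{t\ge1}$ with $0<\beta_{t+1}\le\beta_t$ for all $t$. Assume all integrals $\int e^{-\beta_sL_t}\mathrm dm$ appearing below are finite, and define $\mathrm dm_t=e^{-\beta_tL_{t-1}}\mathrm dm/\int e^{-\beta_tL_{t-1}}\mathrm dm$. Then for all $n\ge1$, \[-\sum_{t=1}^n\frac{1}{\beta_t}\ln\Big(\int_Me^{-\beta_t\ell_t}\,\mathrm dm_t\Big)\le-\frac{1}{\beta_{n+1}}\ln\Big(\int_Me^{-\beta_{n+1}L_n}\,\mathrm dm\Big).\] *)

From mathcomp Require Import all_boot all_order all_algebra.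
From mathcomp Require Import all_classical all_reals all_analysis.
Set Implicit Arguments. Unset Strict Implicit. Unset Printing Implicit Defensive.
Import Order.TTheory GRing.Theory Num.Theory.
Local Open Scope ring_scope.

(* L_t = \sum_{s=1}^t ell_s  (so L_0 = 0); ell_0 is unused. *)
Definition Lsum {T} {R : realType} (ell : nat -> T -> R) (t : nat) (x : T) : R :=
  \sum_(1 <= s < t.+1) ell s x.

Definition gibbsZ d (T : measurableType d) (R : realType)
  (m : {measure set T -> \bar R}) (beta : nat -> R) (ell : nat -> T -> R) (t : nat) : R :=
  fine (\int[m]_x (expR (- beta t * Lsum ell t.-1 x))%:E).

(* integral of f against dm_t = exp(-beta_t L_{t-1}) dm / Z_t *)
Definition gibbs_int d (T : measurableType d) (R : realType)
  (m : {measure set T -> \bar R}) (beta : nat -> R) (ell : nat -> T -> R) (t : nat)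
  (f : T -> R) : R :=
  fine (\int[m]_x (f x * expR (- beta t * Lsum ell t.-1 x))%:E) / gibbsZ m beta ell t.

From mathcomp Require Import all_boot all_order all_algebra.
From mathcomp Require Import all_classical all_reals all_analysis.
From mathcomp Require Import measurable_realfun ring.
Import Order.TTheory GRing.Theory Num.Theory.
Local Open Scope ring_scope.

(* Write F_G(b) := (1/b) ln \int exp(-b G) dm  (log_partition).  Since
   exp(-b_t l_t) exp(-b_t L_{t-1}) = exp(-b_t L_t), the t-th term of the sum
   is F_{L_t}(b_t) - F_{L_{t-1}}(b_t).  On a probability space b |-> F_G(b) is
   nondecreasing: this is Lyapunov's inequality \int f^r <= (\int f)^r for
   0 < r <= 1 (a case of Hoelder's inequality) with f = exp(-a G), r = b/a.
   So F_{L_t}(b_{t+1}) <= F_{L_t}(b_t), and minus the sum is bounded by a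
   telescoping sum equal to F_{L_0}(b_1) - F_{L_n}(b_{n+1}) = - F_{L_n}(b_{n+1}). *)

Section PartialSums.
Context {T : Type} {R : realType} (ell : nat -> T -> R).

Lemma Lsum0 x : Lsum ell 0 x = 0.
Proof. by rewrite /Lsum big_geq. Qed.

Lemma LsumS t x : Lsum ell t.+1 x = Lsum ell t x + ell t.+1 x.
Proof. by rewrite /Lsum big_nat_recr. Qed.

End PartialSums.

Lemma measurable_Lsum {d} {T : measurableType d} {R : realType} {ell : nat -> T -> R} :
  (forall t, (1 <= t)%N -> measurable_fun setT (ell t)) ->
  forall t, measurable_fun setT (Lsum ell t).
Proof.
move=> hell; elim=> [|t IH].
  rewrite (_ : Lsum ell 0 = cst 0); first exact: measurable_cst.
  by apply/funext => x; rewrite Lsum0.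
rewrite (_ : Lsum ell t.+1 = Lsum ell t \+ ell t.+1).
  by apply: measurable_funD => //; exact: hell.
by apply/funext => x; rewrite LsumS.
Qed.

Section PositiveIntegral.
Context {d} {T : measurableType d} {R : realType} (m : {measure set T -> \bar R}).

(* The integral of an everywhere positive function against a nonzero measure
   is positive: otherwise the function would vanish almost everywhere. *)
Lemma integral_expR_gt0 (h : T -> R) : (0 < m setT)%E -> measurable_fun setT h ->
  (0 < \int[m]_x (expR (h x))%:E)%E.
Proof.
move=> m0 mh; rewrite lt_def integral_ge0 ?andbT => [|x _]; last by rewrite lee_fin expR_ge0.
apply/negP => /eqP I0.
have mf : measurable_fun setT (fun x => (expR (h x))%:E).
  by apply/measurable_EFinP; apply: measurableT_comp => //; exact: measurable_expR.
have : (\int[m]_(x in setT) `|(expR (h x))%:E|)%E = 0.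
  rewrite -[RHS]I0; apply: eq_integral => x _.
  by rewrite gee0_abs // lee_fin expR_ge0.
move=> /(ae_eq_integral_abs m measurableT mf) [N [mN N0 sub]].
have : (m setT <= m N)%E.
  apply: le_measure; rewrite ?inE // => x _; apply: sub => /= /(_ I) /eqP.
  by rewrite eqe gt_eqF // expR_gt0.
by rewrite N0 leNgt m0.
Qed.

End PositiveIntegral.

Section Lyapunov.
Context {d} {T : measurableType d} {R : realType} (m : probability T R).

(* Lyapunov's inequality: on a probability space, \int f^r <= (\int f)^r for a
   nonnegative integrable f and 0 < r <= 1.  For r < 1 it is Hoelder's
   inequality for f^r and the constant 1 with exponents 1/r and 1/(1-r). *)
Lemma integral_powR_le (f : T -> R) (r : R) :
  measurable_fun setT f -> (forall x, 0 <= f x) -> 0 < r -> r <= 1 ->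
  (\int[m]_x (f x)%:E < +oo)%E ->
  (\int[m]_x (f x `^ r)%:E <= (fine (\int[m]_x (f x)%:E) `^ r)%:E)%E.
Proof.
move=> mf f0 r0 r1 ffin.
have f_fin : (\int[m]_x (f x)%:E)%E \is a fin_num.
  by rewrite ge0_fin_numE // integral_ge0 // => x _; rewrite lee_fin.
have [->|r_neq1] := eqVneq r 1.
  rewrite powRr1 ?fine_ge0 ?integral_ge0// => [|x _]; last by rewrite lee_fin.
  by rewrite fineK //; under eq_integral => x _ do rewrite powRr1 //.
have r_lt1 : r < 1 by rewrite lt_neqAle r_neq1.
pose F x := f x `^ r.
have mF : measurable_fun setT F := measurableT_comp (measurable_powR r) mf.
have p0 : 0 < r^-1 by rewrite invr_gt0.
have q0 : 0 < (1 - r)^-1 by rewrite invr_gt0 subr_gt0.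
have pq : r^-1^-1 + (1 - r)^-1^-1 = 1 by rewrite !invrK addrC subrK.
have := hoelder m mF (@measurable_cst _ _ T _ setT (1:R)) p0 q0 pq.
rewrite Lnorm1.
have -> : (\int[m]_x `|(EFin \o (F \* cst 1)%R) x| = \int[m]_x (F x)%:E)%E.
  by apply: eq_integral => x _ /=; rewrite mulr1 ger0_norm // powR_ge0.
have -> : Lnorm m (1 - r)^-1%:E (EFin \o cst 1%R) = 1%E.
  rewrite (@Lnorm_cst1 _ _ _ m) [X in (X `^ _)%E](_ : _ = 1%E) ?poweR1r //.
  exact: probability_setT.
rewrite mule1 unlock.
have -> : (\int[m]_x (`|(EFin \o F) x| `^ r^-1) = \int[m]_x (f x)%:E)%E.
  apply: eq_integral => x _ /=.
  by rewrite ger0_norm ?powR_ge0 // /F -powRrM mulfV ?gt_eqF // powRr1.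
by rewrite -(fineK f_fin) poweR_EFin invrK.
Qed.

End Lyapunov.

Section LogPartition.
Context {d} {T : measurableType d} {R : realType} (m : probability T R).

Lemma fine_integral_expR_gt0 {h : T -> R} : measurable_fun setT h ->
  (\int[m]_x (expR (h x))%:E < +oo)%E -> 0 < fine (\int[m]_x (expR (h x))%:E).
Proof.
move=> mh hfin; rewrite fine_gt0 // hfin andbT integral_expR_gt0 //.
apply: lt_le_trans lte01 _; rewrite le_eqVlt; apply/orP; left; apply/eqP.
exact/esym/probability_setT.
Qed.

Definition log_partition (G : T -> R) (b : R) : R :=
  b^-1 * ln (fine (\int[m]_x (expR (- b * G x))%:E)).

(* F_G is nondecreasing in the learning rate: apply Lyapunov's inequality to
   exp(-a G) with exponent b/a, since exp(-b G) = exp(-a G)^(b/a). *)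
Lemma log_partition_le (G : T -> R) (a b : R) :
  measurable_fun setT G -> 0 < b -> b <= a ->
  (\int[m]_x (expR (- a * G x))%:E < +oo)%E ->
  log_partition G b <= log_partition G a.
Proof.
move=> mG b0 ba Za_fin.
have a0 : 0 < a := lt_le_trans b0 ba.
have mGs (c : R) : measurable_fun setT (fun x => c * G x) by exact: measurable_funM.
pose f x := expR (- a * G x).
have scale x : expR (- b * G x) = f x `^ (b / a).
  by rewrite /f -expRM; congr expR; field; rewrite gt_eqF.
have Zb_le : (\int[m]_x (expR (- b * G x))%:E <=
    (fine (\int[m]_x (expR (- a * G x))%:E) `^ (b / a))%:E)%E.
  under eq_integral => x _ do rewrite scale.
  apply: integral_powR_le => //; first by apply: measurableT_comp => //; exact: measurable_expR.
  - by move=> x; exact: expR_ge0.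
  - by rewrite divr_gt0.
  - by rewrite ler_pdivrMr // mul1r.
have Zb_fin : (\int[m]_x (expR (- b * G x))%:E < +oo)%E := le_lt_trans Zb_le (ltry _).
have Za_pos := fine_integral_expR_gt0 (mGs (- a)) Za_fin.
have Zb_pos := fine_integral_expR_gt0 (mGs (- b)) Zb_fin.
rewrite /log_partition -(ler_pM2l b0) mulrA mulfV ?gt_eqF // mul1r.
rewrite mulrA -ln_powR ler_ln ?posrE ?powR_gt0 // -lee_fin fineK //.
by rewrite ge0_fin_numE // integral_ge0 // => x _; rewrite lee_fin expR_ge0.
Qed.

End LogPartition.

Section GibbsWeights.
Context {d} {T : measurableType d} {R : realType}.

Lemma gibbs_int_expR_loss (m : {measure set T -> \bar R}) beta ell t :
  gibbs_int m beta ell t.+1 (fun x => expR (- beta t.+1 * ell t.+1 x)) =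
  fine (\int[m]_x (expR (- beta t.+1 * Lsum ell t.+1 x))%:E) / gibbsZ m beta ell t.+1.
Proof.
congr (fine _ / _); apply: eq_integral => x _ /=.
by rewrite -expRD -mulrDr addrC -LsumS.
Qed.

(* Since L_0 = 0, the first Gibbs measure is m itself. *)
Lemma gibbsZ1 (m : probability T R) beta ell : gibbsZ m beta ell 1 = 1.
Proof.
rewrite /gibbsZ /=; under eq_integral => x _ do rewrite Lsum0 mulr0 expR0.
rewrite integral_cst // mul1e.
exact: (congr1 fine (probability_setT m)).
Qed.

End GibbsWeights.

Theorem mainTheorem10 (d : measure_display) (T : measurableType d) (R : realType)
  (m : probability T R) (ell : nat -> T -> R) (beta : nat -> R)
  (hell : forall t, (1 <= t)%N -> measurable_fun setT (ell t))
  (hbeta : forall t, (1 <= t)%N -> 0 < beta t.+1 /\ beta t.+1 <= beta t)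
  (hfin1 : forall t, (1 <= t)%N ->
     (\int[m]_x (expR (- beta t * Lsum ell t.-1 x))%:E < +oo)%E)
  (hfin2 : forall t, (1 <= t)%N ->
     (\int[m]_x (expR (- beta t * Lsum ell t x))%:E < +oo)%E)
  (n : nat) (hn : (1 <= n)%N) :
  - (\sum_(1 <= t < n.+1)
        (beta t)^-1 * ln (gibbs_int m beta ell t (fun x => expR (- beta t * ell t x))))
  <= - (beta n.+1)^-1 * ln (fine (\int[m]_x (expR (- beta n.+1 * Lsum ell n x))%:E)).
Proof.
have mL := measurable_Lsum hell.
pose c t := log_partition m (Lsum ell t.-1) (beta t).
pose a t := log_partition m (Lsum ell t) (beta t).
have term t : (1 <= t)%N ->
    (beta t)^-1 * ln (gibbs_int m beta ell t (fun x => expR (- beta t * ell t x)))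
    = a t - c t.
  case: t => // t _; rewrite gibbs_int_expR_loss ln_div -?mulrBr //.
  - by rewrite posrE; apply: fine_integral_expR_gt0 (hfin2 _ _) => //; exact: measurable_funM.
  - by rewrite posrE; apply: fine_integral_expR_gt0 (hfin1 _ _) => //; exact: measurable_funM.
have step t : (1 <= t)%N -> c t.+1 <= a t.
  by move=> t1; have [b0 ba] := hbeta t t1; exact: log_partition_le (mL t) b0 ba (hfin2 t t1).
have c1 : c 1%N = 0 by rewrite /c /log_partition -/(gibbsZ m beta ell 1) gibbsZ1 ln1 mulr0.
have telescope : \sum_(1 <= t < n.+1) (c t - c t.+1) = c 1%N - c n.+1.
  by rewrite -opprB -telescope_sumr // -sumrN; apply: eq_bigr => t _; rewrite opprB.
rewrite (eq_big_nat _ _ (fun t t1 => term t (andP t1).1)) -sumrN.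
apply: le_trans (_ : \sum_(1 <= t < n.+1) (c t - c t.+1) <= _).
  by apply: ler_sum_nat => t /andP[t1 _]; rewrite opprB lerD2l lerN2 step.
by rewrite telescope c1 sub0r mulNr.
Qed.
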